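(* Let $f_\Theta$ be a prior probability density on $\mathbb{R}$ with finite mean $\theta_0=\int\theta f_\Theta(\theta)d\theta$. Let $l_\epsilon,l_1,\dots,l_k$ be probability densities on $\mathbb{R}$, $\Delta_1,\dots,\Delta_k\in\mathbb{R}$, and weights $\phi_\epsilon,\phi_1,\dots,\phi_k\in[0,1]$ with $\phi_\epsilon+\sum_{i=1}^k\phi_i=1$ and $\phi_\epsilon>0$. Consider the mixture signal likelihood $$l_{X|\Theta}(x\mid\theta)=\phi_\epsilon\,l_\epsilon(x-\theta)+\sum_{i=1}^k\phi_i\,l_i(x-\Delta_i).$$ Fix $x$ with $J_0(x)=\int f_\Theta(\theta)l_\epsilon(x-\theta)d\theta\in(0,\infty)$ and $\int|\theta| f_\Theta(\theta)l_\epsilon(x-\theta)d\theta<\infty$. Let $\theta_1=\frac{\int\theta f_\Theta(\theta)l_{X|\Theta}(x\mid\theta)d\theta}{\int f_\Theta(\theta)l_{X|\Theta}(x\mid\theta)d\theta}$ be the posterior mean and $\theta_1^{nm}=\frac{\int\theta f_\Theta(\theta)l_\epsilon(x-\theta)d\theta}{J_0(x)}$ the posterior mean under the non-mixture signal with likelihood $l_\epsilon(x-\theta)$. Then $$\theta_1=\alpha(x)\,\theta_1^{nm}+(1-\alpha(x))\,\theta_0,\qquad \alpha(x)=\Bigl(1+\sum_{i=1}^k\frac{\phi_i}{\phi_\epsilon}\frac{l_i(x-\Delta_i)}{J_0(x)}\Bigr)^{-1}\in[0,1].$$ *)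

From HB Require Import structures.
From mathcomp Require Import all_boot all_order all_algebra.
From mathcomp Require Import all_classical all_reals all_analysis.
Set Implicit Arguments. Unset Strict Implicit. Unset Printing Implicit Defensive.
Import Order.TTheory GRing.Theory Num.Theory.
Local Open Scope ring_scope.

Definition is_density (R : realType) (f : R -> R) : Prop :=
  measurable_fun setT f /\ (forall t, 0 <= f t) /\
  (\int[@lebesgue_measure R]_t (f t)%:E = 1)%E.

Definition RInt (R : realType) (g : R -> R) : R :=
  Rintegral (@lebesgue_measure R) setT g.

Definition mix_lik (R : realType) (k : nat) (phie : R) (phi : 'I_k -> R)
  (le : R -> R) (l : 'I_k -> R -> R) (D : 'I_k -> R) (x th : R) : R :=
  phie * le (x - th) + \sum_(i < k) phi i * l i (x - D i).

Definition prior_mean (R : realType) (f : R -> R) : R := RInt (fun t => t * f t).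

Definition J0 (R : realType) (f le : R -> R) (x : R) : R :=
  RInt (fun t => f t * le (x - t)).

Definition post_mean (R : realType) (k : nat) (f : R -> R) (phie : R)
  (phi : 'I_k -> R) (le : R -> R) (l : 'I_k -> R -> R) (D : 'I_k -> R) (x : R) : R :=
  RInt (fun t => t * f t * mix_lik phie phi le l D x t) /
  RInt (fun t => f t * mix_lik phie phi le l D x t).

Definition post_mean_nm (R : realType) (f le : R -> R) (x : R) : R :=
  RInt (fun t => t * f t * le (x - t)) / J0 f le x.

Definition alpha (R : realType) (k : nat) (f : R -> R) (phie : R)
  (phi : 'I_k -> R) (le : R -> R) (l : 'I_k -> R -> R) (D : 'I_k -> R) (x : R) : R :=
  (1 + \sum_(i < k) (phi i / phie) * (l i (x - D i) / J0 f le x))^-1.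

(* Every component of the mixture except l_eps(x - theta) is constant in theta.
   Writing S for that constant, both posterior integrals split as
   int g f (phi_eps l_eps(x - .) + S) = phi_eps (int g f l_eps(x - .)) + S (int g f),
   with g = id for the numerator and g = 1 for the denominator.  Hence
   theta_1 = (phi_eps N + S theta_0) / (phi_eps J_0 + S) with N / J_0 = theta_1^nm,
   a weighted mean of theta_1^nm and theta_0 with weight
   phi_eps J_0 / (phi_eps J_0 + S) = alpha(x). *)

From HB Require Import structures.
From mathcomp Require Import all_boot all_order all_algebra.
From mathcomp Require Import all_classical all_reals all_analysis.
From mathcomp Require Import measurable_realfun ring.
Set Implicit Arguments.
Unset Strict Implicit.
Unset Printing Implicit Defensive.

Import Order.TTheory GRing.Theory Num.Theory.
Local Open Scope ring_scope.

Lemma mediant_convex_combination (F : fieldType) (a J N S M : F) :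
  a != 0 -> J != 0 -> a * J + S != 0 ->
  (a * N + S * M) / (a * J + S) =
  (1 + S / (a * J))^-1 * (N / J) + (1 - (1 + S / (a * J))^-1) * M.
Proof.
move=> a0 J0 aJS0.
have -> : 1 + S / (a * J) = (a * J + S) / (a * J) by field; rewrite a0 J0.
by rewrite invf_div; field; rewrite ?aJS0 ?a0 ?J0.
Qed.

Lemma invf1D_ge0_le1 (F : realFieldType) (s : F) :
  0 <= s -> 0 <= (1 + s)^-1 <= 1.
Proof.
move=> s0; have s1 : 0 < 1 + s by rewrite ltr_wpDr.
by rewrite invr_ge0 ltW //= invf_le1 // lerDl.
Qed.

Lemma RintegralDZ d (T : measurableType d) (R : realType)
    (mu : {measure set T -> \bar R}) (D : set T) (g h : T -> R) (a b : R) :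
  measurable D -> mu.-integrable D (EFin \o g) -> mu.-integrable D (EFin \o h) ->
  \int[mu]_(t in D) (a * g t + b * h t) =
  a * \int[mu]_(t in D) g t + b * \int[mu]_(t in D) h t.
Proof.
move=> mD ig ih.
have iZ (c : R) u : mu.-integrable D (EFin \o u) ->
    mu.-integrable D (EFin \o (fun t => c * u t)).
  move=> iu; apply: eq_integrable mD _ _ _ (integrableZl mD c iu).
  by move=> t _ /=; rewrite EFinM.
by rewrite RintegralD ?iZ // !RintegralZl.
Qed.

Lemma integrable_density (R : realType) (f : R -> R) :
  is_density f -> (@lebesgue_measure R).-integrable setT (EFin \o f).
Proof.
move=> [mf [f0 f1]]; apply/integrableP; split; first exact/measurable_EFinP.
by under eq_integral => t _ do rewrite /= ger0_norm //; rewrite f1 ltry.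
Qed.

Lemma RInt_density (R : realType) (f : R -> R) : is_density f -> RInt f = 1.
Proof. by move=> [_ [_ f1]]; rewrite /RInt /Rintegral f1. Qed.

Lemma measurable_fun_reflect (R : realType) (g : R -> R) (x : R) :
  measurable_fun setT g -> measurable_fun setT (fun t : R => g (x - t)).
Proof. by move=> mg; apply: (measurableT_comp mg); exact: measurable_funB. Qed.

Section mixture_likelihood.
Variables (R : realType) (k : nat) (phie : R) (phi : 'I_k -> R).
Variables (le : R -> R) (l : 'I_k -> R -> R) (D : 'I_k -> R) (x : R).

Definition mix_lik_bg : R := \sum_(i < k) phi i * l i (x - D i).

Lemma mix_lik_bg_ge0 :
  (forall i, 0 <= phi i) -> (forall i t, 0 <= l i t) -> 0 <= mix_lik_bg.
Proof. by move=> phi0 l0; apply: sumr_ge0 => i _; rewrite mulr_ge0. Qed.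

Lemma RInt_mix_lik (g : R -> R) :
  (@lebesgue_measure R).-integrable setT (EFin \o (fun t => g t * le (x - t))) ->
  (@lebesgue_measure R).-integrable setT (EFin \o g) ->
  RInt (fun t => g t * mix_lik phie phi le l D x t) =
  phie * RInt (fun t => g t * le (x - t)) + mix_lik_bg * RInt g.
Proof.
move=> igle ig; rewrite /RInt -RintegralDZ //; congr Rintegral.
by apply: funext => t; rewrite /mix_lik -/mix_lik_bg; ring.
Qed.

Lemma alphaE (f : R -> R) : phie != 0 -> J0 f le x != 0 ->
  alpha f phie phi le l D x = (1 + mix_lik_bg / (phie * J0 f le x))^-1.
Proof.
move=> phie0 J00; rewrite /alpha /mix_lik_bg mulr_suml.
by congr (1 + _)^-1; apply: eq_bigr => i _; field; rewrite phie0 J00.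
Qed.

End mixture_likelihood.

Theorem mainTheorem9 (R : realType) (k : nat) (f : R -> R)
  (le : R -> R) (l : 'I_k -> R -> R) (D : 'I_k -> R)
  (phie : R) (phi : 'I_k -> R) (x : R) :
  is_density f ->
  (@lebesgue_measure R).-integrable setT (fun t => (t * f t)%:E) ->
  is_density le ->
  (forall i, is_density (l i)) ->
  0 < phie <= 1 ->
  (forall i, 0 <= phi i <= 1) ->
  phie + \sum_(i < k) phi i = 1 ->
  (0 < \int[@lebesgue_measure R]_t (f t * le (x - t))%:E < +oo)%E ->
  (\int[@lebesgue_measure R]_t (`|t| * f t * le (x - t))%:E < +oo)%E ->
  post_mean f phie phi le l D x =
    alpha f phie phi le l D x * post_mean_nm f le x
    + (1 - alpha f phie phi le l D x) * prior_mean f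
  /\ 0 <= alpha f phie phi le l D x <= 1.
Proof.
move=> fd itf [mle [le0 _]] ld /andP[phie0 _] phi01 _ /andP[J0_gt0 J0_fin] N_fin.
have [mf [f0 _]] := fd.
have mlex := measurable_fun_reflect x mle.
have iJ : (@lebesgue_measure R).-integrable setT (EFin \o (fun t => f t * le (x - t))).
  apply/integrableP; split; first by apply/measurable_EFinP; exact: measurable_funM.
  by under eq_integral => t _ do rewrite /= ger0_norm ?mulr_ge0 //.
have iN : (@lebesgue_measure R).-integrable setT
    (EFin \o (fun t => t * f t * le (x - t))).
  apply/integrableP; split.
    by apply/measurable_EFinP; do 2 apply: measurable_funM => //.
  by under eq_integral => t _ do rewrite /= !normrM (ger0_norm (f0 t)) (ger0_norm (le0 _)).
have J_gt0 : 0 < J0 f le x by apply: fine_gt0; rewrite J0_gt0 J0_fin.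
have S_ge0 : 0 <= mix_lik_bg phi l D x.
  by apply: mix_lik_bg_ge0 => [i|i]; [case/andP: (phi01 i) | case: (ld i) => _ []].
rewrite alphaE ?gt_eqF //; split; last by rewrite invf1D_ge0_le1 // divr_ge0 // ltW // mulr_gt0.
have iF := integrable_density fd.
rewrite /post_mean !RInt_mix_lik // (RInt_density fd) mulr1.
have den_gt0 : 0 < phie * J0 f le x + mix_lik_bg phi l D x.
  by rewrite ltr_wpDr // mulr_gt0.
by rewrite mediant_convex_combination // gt_eqF.
Qed.
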